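(* Let $0<p\le1$, $\ell^p=\{\{x_n\}\subset\mathbb R:\sum_{n=1}^\infty|x_n|^p<\infty\}$, and $D(x,y)=\big(\sum_{n=1}^\infty|x_n-y_n|^p\big)^{1/p}$, which is a $b$-metric with coefficient $K=2^{1/p}$. Let $q=\frac{p}{p+1}$, so that $(2K)^q=2$. Then the function $$d(x,y)=\inf\Big\{\sum_{i=1}^n D^{q}(x_i,x_{i+1}): x_1=x,x_2,\dots,x_{n+1}=y\in \ell^p,\ n\in\mathbb N\Big\}$$ equals $\big(\sum_{n=1}^\infty|x_n-y_n|^p\big)^{\frac{1}{p+1}}$ for all $x,y\in\ell^p$, and this is a metric on $\ell^p$. *)

From Stdlib Require Import Reals List ClassicalEpsilon.
Open Scope R_scope.

(* Real power with the convention 0^a = 0 (for a > 0); only used on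
   nonnegative bases. Stdlib's Rpower 0 a = 1, hence this wrapper. *)
Definition rpow (x a : R) : R :=
  if Rlt_dec 0 x then Rpower x a else 0.

(* Sequences indexed by nat (index 0 plays the role of n = 1). *)
Definition seqR := nat -> R.

(* Value of a convergent series (chosen classically; unspecified otherwise). *)
Definition series (f : nat -> R) : R :=
  epsilon (inhabits 0) (fun l => infinite_sum f l).

Definition lp (p : R) (x : seqR) : Prop :=
  exists l, infinite_sum (fun n => rpow (Rabs (x n)) p) l.

Definition lp_sum (p : R) (x y : seqR) : R :=
  series (fun n => rpow (Rabs (x n - y n)) p).

Definition Dlp (p : R) (x y : seqR) : R := rpow (lp_sum p x y) (1 / p).

Definition Kcoef (p : R) : R := Rpower 2 (1 / p).
Definition qexp (p : R) : R := p / (p + 1).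

(* cost of the chain x = x_1, x_2, ..., x_{n+1} = y with intermediate
   points l = [x_2; ...; x_n]  (n >= 1) *)
Fixpoint chain_cost {X : Type} (c : X -> X -> R) (x : X) (l : list X) (y : X) : R :=
  match l with
  | nil => c x y
  | z :: l' => c x z + chain_cost c z l' y
  end.

Definition is_inf (E : R -> Prop) (m : R) : Prop :=
  (forall r, E r -> m <= r) /\ (forall m', (forall r, E r -> m' <= r) -> m' <= m).

Definition chain_sums (p : R) (x y : seqR) (r : R) : Prop :=
  exists l : list seqR, Forall (lp p) l /\
    r = chain_cost (fun a b => rpow (Dlp p a b) (qexp p)) x l y.

Definition dchain (p : R) (x y : seqR) : R :=
  epsilon (inhabits 0) (is_inf (chain_sums p x y)).

(* Since 0 < p <= 1, t |-> t^p is subadditive, so S(x,y) = sum |x_n - y_n|^p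
   satisfies the ordinary triangle inequality, and then so does
   S^(1/(p+1)) = D^q.  For a cost satisfying the triangle inequality the
   one-step chain x, y is already optimal, so the chain infimum d equals
   S^(1/(p+1)), which is a metric. *)
From Stdlib Require Import Reals List ClassicalEpsilon Lra FunctionalExtensionality.
Open Scope R_scope.

Lemma rpow_ge0 x a : 0 <= rpow x a.
Proof. unfold rpow, Rpower; destruct (Rlt_dec 0 x); [left; apply exp_pos | lra]. Qed.

Lemma rpow_le0 x a : x <= 0 -> rpow x a = 0.
Proof. intro Hx; unfold rpow; destruct (Rlt_dec 0 x); lra. Qed.

Lemma rpow_gt0 x a : 0 < x -> rpow x a = Rpower x a.
Proof. intro Hx; unfold rpow; destruct (Rlt_dec 0 x); lra. Qed.

Lemma rpow_eq0 x a : rpow x a = 0 -> x <= 0.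
Proof.
  intro H; destruct (Rle_or_lt x 0) as [Hx | Hx]; auto.
  rewrite rpow_gt0 in H by exact Hx; pose proof (exp_pos (a * ln x)); unfold Rpower in H; lra.
Qed.

Lemma rpow_rpow x a b : rpow (rpow x a) b = rpow x (a * b).
Proof.
  destruct (Rle_or_lt x 0) as [Hx | Hx].
  - rewrite !(rpow_le0 x) by exact Hx; apply rpow_le0; lra.
  - rewrite (rpow_gt0 x a), !rpow_gt0 by (auto; apply exp_pos); apply Rpower_mult.
Qed.

Lemma Rpower_ge_base t a : 0 < t <= 1 -> 0 < a <= 1 -> t <= Rpower t a.
Proof.
  intros Ht Ha.
  assert (Hln : ln t <= 0).
  { destruct (Req_dec t 1) as [-> | Ht1]; [rewrite ln_1; lra|].
    rewrite <- ln_1; left; apply ln_increasing; lra. }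
  unfold Rpower; rewrite <- (exp_ln t) at 1 by lra.
  assert (Hle : ln t <= a * ln t) by nra.
  destruct Hle as [Hlt | Heq]; [left; apply exp_increasing; exact Hlt | rewrite <- Heq; lra].
Qed.

Lemma Rpower_mul_le a t s : 0 < a <= 1 -> 0 < t <= s ->
  t * Rpower s a <= s * Rpower t a.
Proof.
  intros Ha Ht.
  assert (Hts : 0 < t / s) by (apply Rdiv_lt_0_compat; lra).
  assert (Hle : t / s <= Rpower (t / s) a).
  { apply Rpower_ge_base; auto; split; auto.
    apply Rmult_le_reg_r with s; [lra|]; unfold Rdiv; rewrite Rmult_assoc, Rinv_l; lra. }
  assert (Et : Rpower t a = Rpower s a * Rpower (t / s) a).
  { rewrite Rpower_mult_distr by lra; f_equal; field; lra. }
  assert (Hsa : 0 < Rpower s a) by apply exp_pos.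
  rewrite Et; replace (t * Rpower s a) with (s * (Rpower s a * (t / s))) by (field; lra).
  apply Rmult_le_compat_l; [lra|]; apply Rmult_le_compat_l; lra.
Qed.

Lemma rpow_le_compat a x y : 0 <= a -> x <= y -> rpow x a <= rpow y a.
Proof.
  intros Ha Hxy; destruct (Rle_or_lt x 0) as [Hx | Hx].
  - rewrite rpow_le0 by exact Hx; apply rpow_ge0.
  - rewrite !rpow_gt0 by lra; apply Rle_Rpower_l; lra.
Qed.

Lemma rpow_subadd a u v : 0 < a <= 1 -> 0 <= u -> 0 <= v ->
  rpow (u + v) a <= rpow u a + rpow v a.
Proof.
  intros Ha Hu Hv; pose proof (rpow_ge0 u a); pose proof (rpow_ge0 v a).
  destruct Hu as [Hu | <-]; [| rewrite Rplus_0_l, (rpow_le0 0); lra].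
  destruct Hv as [Hv | <-]; [| rewrite Rplus_0_r, (rpow_le0 0); lra].
  rewrite !rpow_gt0 by lra.
  pose proof (Rpower_mul_le a u (u + v) Ha ltac:(lra)).
  pose proof (Rpower_mul_le a v (u + v) Ha ltac:(lra)).
  apply Rmult_le_reg_l with (u + v); lra.
Qed.

Lemma rpow_le_add a u v w : 0 < a <= 1 -> 0 <= u -> 0 <= v -> w <= u + v ->
  rpow w a <= rpow u a + rpow v a.
Proof.
  intros Ha Hu Hv Hw.
  apply Rle_trans with (rpow (u + v) a); [apply rpow_le_compat; lra | apply rpow_subadd; auto].
Qed.

Definition summable (f : nat -> R) : Prop := exists l, infinite_sum f l.

Lemma series_spec f : summable f -> infinite_sum f (series f).
Proof. intro H; unfold series; apply epsilon_spec, H. Qed.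

Lemma summable_le_add f g h : (forall n, 0 <= f n <= g n + h n) ->
  summable g -> summable h -> summable f.
Proof.
  intros Hf [lg Hg] [lh Hh].
  assert (Hgh : {l | Un_cv (fun N => sum_f_R0 (fun n => g n + h n) N) l}).
  { exists (lg + lh).
    apply Un_cv_ext with (fun N => sum_f_R0 g N + sum_f_R0 h N).
    - intro N; symmetry; apply sum_plus.
    - apply CV_plus; auto. }
  destruct (Rseries_CV_comp f _ Hf Hgh) as [l Hl]; exists l; exact Hl.
Qed.

Lemma series_le_add f g h : (forall n, f n <= g n + h n) ->
  summable f -> summable g -> summable h -> series f <= series g + series h.
Proof.
  intros H Hf Hg Hh; apply series_spec in Hf, Hg, Hh.
  apply (Rle_cv_lim (Un := sum_f_R0 f) (Vn := fun N => sum_f_R0 g N + sum_f_R0 h N)); auto.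
  - intro N; rewrite <- sum_plus; apply sum_Rle; auto.
  - apply CV_plus; auto.
Qed.

Lemma series_term_le f : (forall n, 0 <= f n) -> summable f ->
  forall k, f k <= series f.
Proof.
  intros H Hf k; apply series_spec in Hf.
  apply Rle_trans with (sum_f_R0 f k).
  - destruct k as [|k]; simpl; [lra|]; pose proof (cond_pos_sum f k H); lra.
  - apply growing_ineq; auto; intro n; simpl; specialize (H (S n)); lra.
Qed.

Lemma series_ge0 f : (forall n, 0 <= f n) -> summable f -> 0 <= series f.
Proof. intros H Hf; apply Rle_trans with (f 0%nat); auto; apply series_term_le; auto. Qed.

Lemma series_eq0 f : (forall n, 0 <= f n) -> summable f -> series f = 0 ->
  forall n, f n = 0.
Proof. intros H Hf H0 n; pose proof (series_term_le f H Hf n); pose proof (H n); lra. Qed.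

Lemma series0 : series (fun _ => 0) = 0.
Proof.
  apply (uniqueness_sum (fun _ => 0)); [apply series_spec; exists 0|];
    intros eps He; exists 0%nat; intros n _; rewrite sum_cte; unfold Rdist;
    rewrite Rmult_0_l, Rminus_0_r, Rabs_R0; lra.
Qed.

Lemma chain_cost_ge {X : Type} (P : X -> Prop) (c : X -> X -> R) :
  (forall x y z, P x -> P y -> P z -> c x z <= c x y + c y z) ->
  forall l x y, P x -> P y -> Forall P l -> c x y <= chain_cost c x l y.
Proof.
  intros Htri l; induction l as [|z l IH]; intros x y Hx Hy Hl; simpl; [lra|].
  inversion Hl as [|? ? Hz Hl']; subst.
  apply Rle_trans with (c x z + c z y); [apply Htri; auto|].
  specialize (IH z y Hz Hy Hl'); lra.
Qed.

Lemma is_inf_min (E : R -> Prop) m :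
  E m -> (forall r, E r -> m <= r) -> forall m', is_inf E m' -> m' = m.
Proof. intros Hm Hlb m' [Hlb' Hgreat]; apply Rle_antisym; auto. Qed.

Lemma dchain_min p x y m : chain_sums p x y m ->
  (forall r, chain_sums p x y r -> m <= r) -> dchain p x y = m.
Proof.
  intros Hm Hlb; apply (is_inf_min _ m Hm Hlb).
  unfold dchain; apply epsilon_spec; exists m; split; auto.
Qed.

Lemma Rpower_2Kcoef_qexp p : 0 < p -> Rpower (2 * Kcoef p) (qexp p) = 2.
Proof.
  intro hp; unfold Kcoef, qexp.
  rewrite <- (Rpower_1 2) at 1 by lra; rewrite <- Rpower_plus, Rpower_mult.
  replace ((1 + 1 / p) * (p / (p + 1))) with 1 by (field; lra); apply Rpower_1; lra.
Qed.

Lemma inv_succ_bounds p : 0 <= p -> 0 < 1 / (p + 1) <= 1.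
Proof.
  intro hp; split; [apply Rdiv_lt_0_compat; lra|].
  apply Rmult_le_reg_r with (p + 1); [lra|]; unfold Rdiv; rewrite Rmult_assoc, Rinv_l; lra.
Qed.

Lemma Dlp_qexp p x y : 0 < p ->
  rpow (Dlp p x y) (qexp p) = rpow (lp_sum p x y) (1 / (p + 1)).
Proof. intro hp; unfold Dlp, qexp; rewrite rpow_rpow; f_equal; field; lra. Qed.

Lemma lp_sum_sym p x y : lp_sum p x y = lp_sum p y x.
Proof. unfold lp_sum; f_equal; extensionality n; rewrite Rabs_minus_sym; reflexivity. Qed.

Lemma lp_sum_same p x : 0 < p -> lp_sum p x x = 0.
Proof.
  intro hp; unfold lp_sum; rewrite <- series0; f_equal; extensionality n.
  rewrite Rminus_diag, Rabs_R0; apply rpow_le0; lra.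
Qed.

Section LpSum.
Variable p : R.
Hypothesis hp0 : 0 < p.
Hypothesis hp1 : p <= 1.

Lemma abs_rpow_triangle a b c :
  rpow (Rabs (a - c)) p <= rpow (Rabs (a - b)) p + rpow (Rabs (b - c)) p.
Proof.
  apply rpow_le_add; try apply Rabs_pos; [lra|].
  replace (a - c) with ((a - b) + (b - c)) by ring; apply Rabs_triang.
Qed.

Lemma lp_summable x y : lp p x -> lp p y ->
  summable (fun n => rpow (Rabs (x n - y n)) p).
Proof.
  intros Hx Hy.
  apply (summable_le_add _ (fun n => rpow (Rabs (x n)) p) (fun n => rpow (Rabs (y n)) p));
    auto.
  intro n; split; [apply rpow_ge0|].
  pose proof (abs_rpow_triangle (x n) 0 (y n)) as H.
  rewrite Rminus_0_r, Rminus_0_l, Rabs_Ropp in H; exact H.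
Qed.

Lemma lp_sum_ge0 x y : lp p x -> lp p y -> 0 <= lp_sum p x y.
Proof. intros; apply series_ge0; [intro; apply rpow_ge0 | apply lp_summable; auto]. Qed.

Lemma lp_sum_triangle x y z : lp p x -> lp p y -> lp p z ->
  lp_sum p x z <= lp_sum p x y + lp_sum p y z.
Proof.
  intros; apply series_le_add; try apply lp_summable; auto; intro; apply abs_rpow_triangle.
Qed.

Lemma lp_sum_eq0 x y : lp p x -> lp p y -> lp_sum p x y = 0 -> x = y.
Proof.
  intros Hx Hy H0; extensionality n.
  pose proof (series_eq0 _ (fun n => rpow_ge0 _ _) (lp_summable x y Hx Hy) H0 n) as Hn.
  apply rpow_eq0 in Hn; pose proof (Rabs_pos (x n - y n)).
  apply Rminus_diag_uniq; destruct (Req_dec (x n - y n) 0) as [| Hne]; auto.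
  apply Rabs_no_R0 in Hne; lra.
Qed.

Lemma lp_sum_rpow_triangle a x y z : 0 < a <= 1 -> lp p x -> lp p y -> lp p z ->
  rpow (lp_sum p x z) a <= rpow (lp_sum p x y) a + rpow (lp_sum p y z) a.
Proof.
  intros; apply rpow_le_add; auto using lp_sum_ge0, lp_sum_triangle.
Qed.

Lemma dchain_lp x y : lp p x -> lp p y ->
  dchain p x y = rpow (lp_sum p x y) (1 / (p + 1)).
Proof.
  intros Hx Hy.
  pose proof (inv_succ_bounds p (Rlt_le _ _ hp0)) as Ha.
  apply dchain_min.
  - exists nil; split; [constructor | simpl; rewrite Dlp_qexp; auto].
  - intros r [l [Hl ->]].
    rewrite <- Dlp_qexp by exact hp0.
    apply (chain_cost_ge (lp p) (fun a b => rpow (Dlp p a b) (qexp p))); auto.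
    intros u v w Hu Hv Hw; rewrite !Dlp_qexp by exact hp0.
    apply lp_sum_rpow_triangle; auto.
Qed.

End LpSum.

Theorem mainTheorem12 (p : R) (hp0 : 0 < p) (hp1 : p <= 1) :
  Rpower (2 * Kcoef p) (qexp p) = 2 /\
  (forall x y : seqR, lp p x -> lp p y ->
     dchain p x y = rpow (lp_sum p x y) (1 / (p + 1))) /\
  (forall x y : seqR, lp p x -> lp p y -> 0 <= dchain p x y) /\
  (forall x y : seqR, lp p x -> lp p y -> (dchain p x y = 0 <-> x = y)) /\
  (forall x y : seqR, lp p x -> lp p y -> dchain p x y = dchain p y x) /\
  (forall x y z : seqR, lp p x -> lp p y -> lp p z ->
     dchain p x z <= dchain p x y + dchain p y z).
Proof.
  pose proof (inv_succ_bounds p (Rlt_le _ _ hp0)) as Ha.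
  split; [apply Rpower_2Kcoef_qexp; exact hp0|].
  split; [apply dchain_lp; auto|].
  split; [intros; rewrite dchain_lp; auto; apply rpow_ge0|].
  split.
  { intros x y Hx Hy; rewrite dchain_lp by auto; split.
    - intro H0; apply rpow_eq0 in H0; pose proof (lp_sum_ge0 p hp0 hp1 x y Hx Hy).
      apply (lp_sum_eq0 p); auto; lra.
    - intros <-; rewrite lp_sum_same by exact hp0; apply rpow_le0; lra. }
  split; [intros; rewrite !dchain_lp, lp_sum_sym; auto|].
  intros; rewrite !dchain_lp; auto; apply lp_sum_rpow_triangle; auto.
Qed.
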